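(* Let $m\geq 3$ be an integer and let $A$ be a multiset of points in $\mathbb{Z}^2$ with $|A|\geq 4m-3$ (counting multiplicities). If $\boldsymbol{p}\in\mathbb{R}^2$ is a point with $\boldsymbol{p}\notin A$ that has half-space depth $m$ with respect to $A$, then $A$ can be partitioned into $m$ submultisets $A_1,\dots,A_m$ with $\boldsymbol{p}\in\conv(A_i)$ for every $i$.
   Context: A point $\boldsymbol{p}$ has half-space depth $t$ with respect to a multiset $A$ if every closed half-plane containing $\boldsymbol{p}$ contains at least $t$ points of $A$, counted with multiplicity. A partition of a multiset into submultisets means the multiplicities of each element in the parts sum to its multiplicity in the multiset. *)

(* Points of Z^2 are pairs of ints; the multiset A is a list
   (multiplicity = number of occurrences). The ambient reals: R : realType. *)
From HB Require Import structures.
From mathcomp Require Import all_boot all_order all_algebra.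
From mathcomp Require Import reals.
Set Implicit Arguments. Unset Strict Implicit. Unset Printing Implicit Defensive.
Import Order.TTheory GRing.Theory Num.Theory.
Local Open Scope ring_scope.

Definition embed (R : realType) (a : int * int) : R * R := (a.1%:~R, a.2%:~R).

Definition in_halfplane (R : realType) (u v c : R) (x : R * R) : bool :=
  u * x.1 + v * x.2 <= c.

Definition halfspace_depth (R : realType) (A : seq (int * int)) (p : R * R)
    (t : nat) : Prop :=
  forall u v c : R, (u, v) != (0, 0) -> in_halfplane u v c p ->
    (t <= count (fun a => in_halfplane u v c (embed R a)) A)%N.

Definition in_conv (R : realType) (B : seq (int * int)) (p : R * R) : Prop :=
  exists w : 'I_(size B) -> R,
    [/\ forall i, 0 <= w i,
        \sum_(i < size B) w i = 1 &
        p = (\sum_(i < size B) w i * (embed R (nth (0, 0) B i)).1,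
             \sum_(i < size B) w i * (embed R (nth (0, 0) B i)).2)].

From HB Require Import structures.
From mathcomp Require Import all_boot all_order all_algebra.
From mathcomp Require Import reals ring lra zify.
From Stdlib Require Import Classical_Prop Wf_nat.
Import Order.TTheory GRing.Theory Num.Theory.
Local Open Scope ring_scope.

(* Let d >= m be the least number of points of A in a closed half-plane
   through p, attained by a half-plane H.  By minimality no point of A lies on
   the boundary line of H, so A splits into the d points Ls inside H and the
   points Ts outside H (at least d of them); sort both by angle around p.  A
   closed half-plane through p containing Ts_m (indexing from 0) contains all
   of Ts_0, ..., Ts_m or all of Ts_m, Ts_m+1, ....  Hence while |A| > 3m the
   point Ts_m can be deleted without dropping the depth below m, and when
   |A| = 3m the points Ts_0, Ts_m, Ls_0 form a triangle around p whose removal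
   leaves depth >= m - 1.  Induction yields m such triangles; the deleted
   points join one of them. *)

Section PlaneGeometry.
Context {R : realType}.
Implicit Types u w x y z a b c e : R * R.

Definition dot u x := u.1 * x.1 + u.2 * x.2.
Definition cross x y := x.1 * y.2 - x.2 * y.1.

Lemma crossC x y : cross x y = - cross y x.
Proof. rewrite /cross; ring. Qed.

Lemma cross_self x : cross x x = 0.
Proof. rewrite /cross; ring. Qed.

Lemma dotNl u x : dot (- u) x = - dot u x.
Proof. rewrite /dot /=; ring. Qed.

Lemma dot_self_gt0 x : x != 0 -> 0 < dot x x.
Proof.
case: x => x1 x2 hx; rewrite /dot /=.
case: (ltrgtP x1 0) => h1; try nra.
case: (ltrgtP x2 0) => h2; try nra.
by move: hx; rewrite h1 h2 eqxx.
Qed.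

Lemma dot_cross_sqr x y : dot x y ^+ 2 + cross x y ^+ 2 = dot x x * dot y y.
Proof. rewrite /dot /cross; ring. Qed.

Lemma dot_cross_expand w x y z :
  cross y z * dot w x = cross x z * dot w y + cross y x * dot w z.
Proof. rewrite /dot /cross; ring. Qed.

Definition comb3 (l1 l2 l3 : R) a b c : R * R :=
  (l1 * a.1 + l2 * b.1 + l3 * c.1, l1 * a.2 + l2 * b.2 + l3 * c.2).

Lemma cross_cycle a b c : comb3 (cross b c) (cross c a) (cross a b) a b c = 0.
Proof. by apply/eqP; rewrite xpair_eqE /cross /=; apply/andP; split; apply/eqP; ring. Qed.

Lemma dot_cross0 w u x y : cross x y = 0 -> dot w x * dot u y = dot w y * dot u x.
Proof.
move=> h; apply/eqP; rewrite -subr_eq0.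
have -> : dot w x * dot u y - dot w y * dot u x = (w.1 * u.2 - w.2 * u.1) * cross x y.
  by rewrite /dot /cross; ring.
by rewrite h mulr0.
Qed.

Lemma cross_ge0_trans u x y z : 0 < dot u x -> 0 < dot u y -> 0 < dot u z ->
  0 <= cross x y -> 0 <= cross y z -> 0 <= cross x z.
Proof.
move=> ux uy uz xy yz; have := dot_cross_expand u y x z.
by rewrite -(pmulr_lge0 _ uy) => ->; apply: addr_ge0; apply: mulr_ge0 => //; apply: ltW.
Qed.

Lemma dot_gt0_between u w x y z : 0 < dot u x -> 0 < dot u y -> 0 < dot u z ->
  0 <= cross y x -> 0 <= cross x z -> 0 < dot w y -> 0 < dot w z -> 0 < dot w x.
Proof.
move=> ux uy uz yx xz wy wz.
have Ew := dot_cross_expand w x y z; have Eu := dot_cross_expand u x y z.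
have [xz0|xz_neq0] := eqVneq (cross x z) 0; last first.
  have xz_gt0 : 0 < cross x z by rewrite lt_def xz_neq0.
  have yz_gt0 : 0 < cross y z by rewrite -(pmulr_lgt0 _ ux) Eu; nra.
  by rewrite -(pmulr_rgt0 _ yz_gt0) Ew; nra.
have [yx0|yx_neq0] := eqVneq (cross y x) 0; last first.
  have yx_gt0 : 0 < cross y x by rewrite lt_def yx_neq0.
  have yz_gt0 : 0 < cross y z by rewrite -(pmulr_lgt0 _ ux) Eu xz0; nra.
  by rewrite -(pmulr_rgt0 _ yz_gt0) Ew xz0; nra.
by rewrite -(pmulr_lgt0 _ uy) -(dot_cross0 w u _ _ yx0); apply: mulr_gt0.
Qed.

Lemma cross_ge0_across u b c e : 0 < dot u b -> dot u c < 0 -> dot u e < 0 ->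
  0 <= cross c e -> 0 <= cross b e -> 0 <= cross b c.
Proof.
move=> ub uc ue ce be; have := dot_cross_expand u c b e.
have : cross b e * dot u c <= 0 by nra.
have : 0 <= cross c e * dot u b by nra.
nra.
Qed.

Lemma dot_gt0_opposite_aux u w a b c e :
  0 < dot u a -> 0 < dot u b -> dot u c < 0 -> dot u e < 0 ->
  0 <= cross a b -> 0 <= cross c e -> 0 <= cross b e ->
  0 < dot w a -> 0 < dot w c -> 0 < dot w b \/ 0 < dot w e.
Proof.
move=> ua ub uc ue ab ce be wa wc.
case: (ltrP 0 (dot w b)) => wb; first by left.
case: (ltrP 0 (dot w e)) => we; first by right.
exfalso.
have bc := cross_ge0_across u b c e ub uc ue ce be.
have be0 : cross b e = 0.
  have := dot_cross_expand w c b e.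
  have : 0 <= cross b e * dot w c by nra.
  have : cross c e * dot w b + cross b c * dot w e <= 0 by nra.
  nra.
have wb0 : dot w b = 0 by have P := dot_cross0 w u _ _ be0; nra.
have ab0 : cross a b = 0.
  have E := dot_cross_expand w b a c; rewrite wb0 mulr0 in E.
  have : 0 <= cross b c * dot w a by nra.
  nra.
by have P := dot_cross0 w u _ _ ab0; nra.
Qed.

(* Exchanging the two sides reduces the case [cross b e < 0] to the auxiliary one. *)
Lemma dot_gt0_opposite u w a b c e :
  0 < dot u a -> 0 < dot u b -> dot u c < 0 -> dot u e < 0 ->
  0 <= cross a b -> 0 <= cross c e -> 0 < dot w a -> 0 < dot w c ->
  0 < dot w b \/ 0 < dot w e.
Proof.
move=> ua ub uc ue ab ce wa wc.
case: (lerP 0 (cross b e)) => be.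
  exact: (dot_gt0_opposite_aux u w a b c e ua ub uc ue ab ce be wa wc).
have eb : 0 <= cross e b by rewrite crossC; lra.
have := @dot_gt0_opposite_aux (- u) w c e a b; rewrite !dotNl !oppr_gt0 !oppr_lt0.
by case/(_ uc ue ua ub ce ab eb wc wa); [right|left].
Qed.

Lemma dot_le0_opposite_aux u w a b c e :
  0 < dot u a -> 0 < dot u b -> dot u c < 0 -> dot u e < 0 ->
  0 <= cross a b -> 0 <= cross c e -> 0 <= cross b e ->
  dot w a <= 0 -> dot w c <= 0 -> dot w b <= 0 \/ dot w e <= 0.
Proof.
move=> ua ub uc ue ab ce be wa wc.
case: (lerP (dot w b) 0) => wb; first by left.
case: (lerP (dot w e) 0) => we; first by right.
exfalso.
have bc := cross_ge0_across u b c e ub uc ue ce be.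
have ce0 : cross c e = 0.
  have := dot_cross_expand w c b e.
  have : cross b e * dot w c <= 0 by nra.
  have : 0 <= cross b c * dot w e by nra.
  nra.
by have P := dot_cross0 w u _ _ ce0; nra.
Qed.

Lemma dot_le0_opposite u w a b c e :
  0 < dot u a -> 0 < dot u b -> dot u c < 0 -> dot u e < 0 ->
  0 <= cross a b -> 0 <= cross c e -> dot w a <= 0 -> dot w c <= 0 ->
  dot w b <= 0 \/ dot w e <= 0.
Proof.
move=> ua ub uc ue ab ce wa wc.
case: (lerP 0 (cross b e)) => be.
  exact: (dot_le0_opposite_aux u w a b c e ua ub uc ue ab ce be wa wc).
have eb : 0 <= cross e b by rewrite crossC; lra.
have := @dot_le0_opposite_aux (- u) w c e a b; rewrite !dotNl !oppr_gt0 !oppr_lt0.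
by case/(_ uc ue ua ub ce ab eb wc wa); [right|left].
Qed.

Lemma exists_dot_gt0 a b c : b != 0 -> 0 < cross b a * cross b c ->
  exists w, [/\ 0 < dot w a, 0 < dot w b & 0 < dot w c].
Proof.
move=> b_neq0 q2_gt0.
have s_neq0 : cross b a != 0 by apply: contraTneq q2_gt0 => ->; rewrite mul0r ltxx.
have q1_gt0 : 0 < cross b a * cross b a by rewrite -expr2 exprn_even_gt0.
pose X1 := `|dot b a| + 1; pose X2 := `|dot b c| + 1.
have X_gt0 : 0 < X1 /\ 0 < X2 by split; rewrite ltr_wpDl.
pose t := (X1 / (cross b a * cross b a) + X2 / (cross b a * cross b c)) * cross b a.
have Ew v : dot (b.1 - t * b.2, b.2 + t * b.1) v = dot b v + t * cross b v.
  by rewrite /dot /cross /=; ring.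
have ta : X1 <= t * cross b a.
  rewrite /t -mulrA mulrDl mulfVK ?gt_eqF // lerDl.
  by apply: mulr_ge0; [apply: divr_ge0; apply: ltW; case: X_gt0 | apply: ltW].
have tc : X2 <= t * cross b c.
  rewrite /t -mulrA mulrDl [X in _ <= _ + X]mulfVK ?gt_eqF // lerDr.
  by apply: mulr_ge0; [apply: divr_ge0; apply: ltW; case: X_gt0 | apply: ltW].
exists (b.1 - t * b.2, b.2 + t * b.1); rewrite !Ew cross_self mulr0 addr0; split.
- by have := ler_norm (- dot b a); rewrite normrN /X1 in ta *; lra.
- exact: dot_self_gt0.
- by have := ler_norm (- dot b c); rewrite normrN /X2 in tc *; lra.
Qed.

Definition conv0 a b c := exists l1 l2 l3 : R,
  [/\ 0 <= l1, 0 <= l2, 0 <= l3, l1 + l2 + l3 = 1 & comb3 l1 l2 l3 a b c = 0].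

Lemma conv0_scale (k1 k2 k3 : R) a b c : 0 <= k1 -> 0 <= k2 -> 0 <= k3 ->
  0 < k1 + k2 + k3 -> comb3 k1 k2 k3 a b c = 0 -> conv0 a b c.
Proof.
move=> k1_ge0 k2_ge0 k3_ge0 k_gt0 [e1 e2]; set k := k1 + k2 + k3.
have kV_ge0 : 0 <= k^-1 by rewrite invr_ge0 ltW.
exists (k1 / k), (k2 / k), (k3 / k); split; try exact: mulr_ge0.
  by rewrite -!mulrDl divff // gt_eqF.
by rewrite /comb3 ![_ / k * _]mulrAC -!mulrDl e1 e2 !mul0r.
Qed.

Lemma comb3_collinear x y z : cross x y = 0 -> comb3 (- dot x y) (dot x x) 0 x y z = 0.
Proof.
move=> xy0; rewrite /comb3 !mul0r !addr0.
have -> : - dot x y * x.1 + dot x x * y.1 = - x.2 * cross x y by rewrite /dot /cross; ring.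
have -> : - dot x y * x.2 + dot x x * y.2 = x.1 * cross x y by rewrite /dot /cross; ring.
by rewrite xy0 !mulr0.
Qed.

Lemma conv0_collinear a b c : a != 0 -> b != 0 -> c != 0 ->
  cross a b = 0 -> cross a c = 0 -> cross b c = 0 ->
  (forall w, ~ [/\ 0 < dot w a, 0 < dot w b & 0 < dot w c]) -> conv0 a b c.
Proof.
move=> a_neq0 b_neq0 c_neq0 ab0 ac0 bc0 noW.
have aa := dot_self_gt0 _ a_neq0; have bb := dot_self_gt0 _ b_neq0.
case: (ltrP (dot a b) 0) => ab.
  by apply: (conv0_scale (- dot a b) (dot a a) 0); [lra..|exact: comb3_collinear].
case: (ltrP (dot a c) 0) => ac.
  apply: (conv0_scale (- dot a c) 0 (dot a a)); [lra..|].
  have [e1 e2] := comb3_collinear _ _ b ac0.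
  by rewrite /comb3 !mul0r !addr0 in e1 e2 *; rewrite e1 e2.
case: (ltrP (dot b c) 0) => bc.
  apply: (conv0_scale 0 (- dot b c) (dot b b)); [lra..|].
  have [e1 e2] := comb3_collinear _ _ a bc0.
  by rewrite /comb3 !mul0r !add0r !addr0 in e1 e2 *; rewrite e1 e2.
have dot_neq0 x y : x != 0 -> y != 0 -> cross x y = 0 -> dot x y != 0.
  move=> x_neq0 y_neq0 xy0; apply: contraTneq (dot_self_gt0 _ x_neq0) => xy.
  have := dot_cross_sqr x y; rewrite xy xy0 expr0n addr0 => /esym/eqP.
  by rewrite mulf_eq0 (gt_eqF (dot_self_gt0 _ y_neq0)) orbF => /eqP ->; rewrite ltxx.
case: (noW a); split => //; rewrite lt_def ?dot_neq0 //.
Qed.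

(* The weights are the cross products of [cross_cycle]; if they have mixed signs,
   [exists_dot_gt0] yields an open half-plane containing [a], [b] and [c]. *)
Lemma conv0_of_no_dot_gt0 a b c : a != 0 -> b != 0 -> c != 0 ->
  (forall w, ~ [/\ 0 < dot w a, 0 < dot w b & 0 < dot w c]) -> conv0 a b c.
Proof.
move=> a_neq0 b_neq0 c_neq0 noW.
have [/and3P [bc ca ab] | not_ge0] :=
  boolP [&& 0 <= cross b c, 0 <= cross c a & 0 <= cross a b].
  case: (ltrP 0 (cross b c + cross c a + cross a b)) => sum.
    exact: (conv0_scale _ _ _ _ _ _ bc ca ab sum (cross_cycle a b c)).
  by apply: conv0_collinear => //; [lra | rewrite crossC; lra | lra].
have [/and3P [bc ca ab] | not_le0] :=
  boolP [&& cross b c <= 0, cross c a <= 0 & cross a b <= 0].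
  case: (ltrP (cross b c + cross c a + cross a b) 0) => sum.
    apply: (conv0_scale (- cross b c) (- cross c a) (- cross a b));
      rewrite ?oppr_ge0 //; first lra.
    by have [e1 e2] := cross_cycle a b c; rewrite /comb3 !mulNr -!opprD e1 e2 oppr0.
  by apply: conv0_collinear => //; [lra | rewrite crossC; lra | lra].
exfalso; have [vc|[vb|va]] :
    cross b c * cross c a < 0 \/ cross b c * cross a b < 0 \/ cross c a * cross a b < 0.
  move: not_ge0 not_le0; rewrite !negb_and -!ltNge => /or3P [] ? /or3P [] ?;
    first [lra | by left; nra | by right; left; nra | by right; right; nra].
- have [w [? ? ?]] := @exists_dot_gt0 a c b c_neq0 (ltac:(rewrite (crossC c b); nra)).
  exact: (noW w).
- have [w [? ? ?]] := @exists_dot_gt0 a b c b_neq0 (ltac:(rewrite (crossC b a); nra)).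
  exact: (noW w).
- have [w [? ? ?]] := @exists_dot_gt0 b a c a_neq0 (ltac:(rewrite (crossC a c); nra)).
  exact: (noW w).
Qed.

Lemma exists_small_scale (T : eqType) (s : seq T) (f g : T -> R) :
  exists2 e : R, 0 < e & forall t, t \in s -> f t != 0 -> e * `|g t| < `|f t|.
Proof.
elim: s => [|t s [e e_gt0 IH]]; first by exists 1.
have [ft0|ft_neq0] := eqVneq (f t) 0.
  by exists e => // t'; rewrite inE => /predU1P [->|/IH//]; rewrite ft0 eqxx.
pose et := `|f t| / (`|g t| + 1).
have et_gt0 : 0 < et by apply: divr_gt0; [rewrite normr_gt0 | apply: ltr_wpDl].
exists (Order.min e et); first by rewrite lt_min e_gt0 et_gt0.
move=> t'; rewrite inE => /predU1P [->|t's] ft'.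
  apply: (le_lt_trans (y := et * `|g t|)); first by rewrite ler_wpM2r // ge_min lexx orbT.
  by rewrite /et mulrAC ltr_pdivrMr ?ltr_wpDl // mulrDr mulr1 ltrDl normr_gt0.
apply: (le_lt_trans (y := e * `|g t'|)); last exact: IH.
by rewrite ler_wpM2r // ge_min lexx.
Qed.

End PlaneGeometry.

Lemma count_lt_in (T : eqType) (P Q : pred T) (s : seq T) :
  {in s, subpred Q P} -> (exists2 x, x \in s & P x && ~~ Q x) ->
  (count Q s < count P s)%N.
Proof.
move=> QP [x xs /andP [Px nQx]].
have := count_predC Q (filter P s); rewrite size_filter count_filter.
have -> : count (predI Q P) s = count Q s.
  by apply: eq_in_count => y ys /=; case Qy: (Q y); rewrite // QP.
have : (0 < count (predC Q) (filter P s))%N.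
  by rewrite -has_count; apply/hasP; exists x; rewrite ?mem_filter ?Px.
lia.
Qed.

Section Depth.
Context {R : realType} (p : R * R).
Implicit Types (a b c : int * int) (A B : seq (int * int)) (u w : R * R).

Definition vec a : R * R := embed R a - p.
Definition closed_hp w a := dot w (vec a) <= 0.
Definition open_hp w a := 0 < dot w (vec a).
Definition depth_ge A m := forall w, w != 0 -> (m <= count (closed_hp w) A)%N.
Definition avoids A := forall a, a \in A -> vec a != 0.

Lemma closed_hpE w a : closed_hp w a = ~~ open_hp w a.
Proof. by rewrite /closed_hp /open_hp leNgt. Qed.

Lemma open_hpN w a : open_hp (- w) a = (dot w (vec a) < 0).
Proof. by rewrite /open_hp dotNl oppr_gt0. Qed.

Lemma depth_ge_halfspace_depth A m : halfspace_depth A p m -> depth_ge A m.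
Proof.
move=> H [u v] uv_neq0; have := H u v (u * p.1 + v * p.2) uv_neq0 (lexx _).
congr (_ <= _)%N; apply: eq_count => a.
rewrite /closed_hp /in_halfplane /embed /dot /vec /= -subr_le0.
by congr (_ <= _); ring.
Qed.

Lemma avoids_embed A : (forall a, a \in A -> p != embed R a) -> avoids A.
Proof. by move=> pA a aA; rewrite /vec subr_eq0 eq_sym pA. Qed.

Lemma in_conv_cons a B : in_conv B p -> in_conv (a :: B) p.
Proof.
case=> w [w_ge0 w_sum1 ->].
exists (fun i : 'I_(size B).+1 => if unlift ord0 i is Some j then w j else 0); split.
- by move=> i; case: (unlift ord0 i).
- by rewrite big_ord_recl unlift_none add0r -w_sum1; apply: eq_bigr => i _; rewrite liftK.
- rewrite !big_ord_recl unlift_none !mul0r !add0r; congr pair;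
    by apply: eq_bigr => i _; rewrite liftK.
Qed.

Lemma in_conv_catl B C : in_conv B p -> in_conv (C ++ B) p.
Proof. by elim: C => //= a C IH /IH; apply: in_conv_cons. Qed.

Lemma in_conv_conv0 a b c : conv0 (vec a) (vec b) (vec c) -> in_conv [:: a; b; c] p.
Proof.
case=> l1 [l2 [l3 [l1_ge0 l2_ge0 l3_ge0 l_sum1 [e1 e2]]]].
exists (fun i : 'I_3 => nth 0 [:: l1; l2; l3] i); split.
- by case=> [[|[|[|i]]]].
- by rewrite !big_ord_recl big_ord0 /= addr0 addrA.
rewrite !big_ord_recl !big_ord0 /= !addr0.
have shift q x y z : l1 * x + (l2 * y + l3 * z) =
    l1 * (x - q) + l2 * (y - q) + l3 * (z - q) + (l1 + l2 + l3) * q by ring.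
move: e1 e2 => /= e1 e2.
by rewrite (shift p.1) (shift p.2) e1 e2 l_sum1 !mul1r !add0r; case: p.
Qed.

Lemma in_conv_triangle a b c : avoids [:: a; b; c] ->
  (forall w, w != 0 -> [|| closed_hp w a, closed_hp w b | closed_hp w c]) ->
  in_conv [:: a; b; c] p.
Proof.
move=> av cover; apply: in_conv_conv0.
apply: conv0_of_no_dot_gt0; rewrite ?av ?inE ?eqxx ?orbT // => w [wa wb wc].
have w_neq0 : w != 0 by apply: contraTneq wa => ->; rewrite /dot /= !mul0r addr0 ltxx.
by case/or3P: (cover w w_neq0); rewrite /closed_hp; lra.
Qed.

Lemma exists_min_depth A :
  exists d w, [/\ w != 0, count (closed_hp w) A = d & depth_ge A d].
Proof.
pose P n := exists2 w, w != 0 & count (closed_hp w) A = n.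
have e1_neq0 : ((1, 0) : R * R) != 0 by rewrite xpair_eqE oner_eq0.
have P_inh : exists n, P n by exists (count (closed_hp (1, 0)) A), (1, 0).
have [d [[[w w_neq0 wd] dmin] _]] :=
  dec_inh_nat_subset_has_unique_least_element P (fun n => classic (P n)) P_inh.
by exists d, w; split=> // w' w'_neq0; apply/ssrnat.leP/dmin; exists w'.
Qed.

(* A point on the boundary line of a minimal closed half-plane could be pushed
   out by a small rotation of the half-plane about p. *)
Lemma tight_no_boundary A d w : avoids A -> depth_ge A d -> w != 0 ->
  count (closed_hp w) A = d -> forall a, a \in A -> dot w (vec a) != 0.
Proof.
move=> av depth w_neq0 wd a0 a0A; apply/negP => /eqP wa0.
have c0_neq0 : cross w (vec a0) != 0.
  apply: contraTneq (dot_self_gt0 _ (av a0 a0A)) => c00.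
  have := dot_cross_sqr w (vec a0); rewrite wa0 c00 expr0n addr0 => /esym/eqP.
  by rewrite mulf_eq0 (gt_eqF (dot_self_gt0 _ w_neq0)) => /eqP ->; rewrite ltxx.
have [e e_gt0 small] := exists_small_scale _ A (fun a => dot w (vec a))
  (fun a => cross w (vec a0) * cross w (vec a)).
pose t := e * cross w (vec a0).
pose w' := (w.1 - t * w.2, w.2 + t * w.1).
have Ew v : dot w' v = dot w v + e * (cross w (vec a0) * cross w v).
  by rewrite /w' /t /dot /cross /=; ring.
have w'_neq0 : w' != 0.
  apply: contraTneq (dot_self_gt0 _ w_neq0) => w'0.
  have := Ew w; rewrite cross_self !mulr0 addr0 w'0 => <-.
  by rewrite /dot /= !mul0r addr0 ltxx.
have := depth w' w'_neq0; rewrite -wd; apply/negP; rewrite -ltnNge.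
apply: count_lt_in => [a aA|]; last first.
  exists a0 => //; rewrite /closed_hp Ew wa0 lexx add0r -ltNge.
  by rewrite mulr_gt0 // -expr2 exprn_even_gt0.
rewrite /closed_hp Ew; apply: contraTT; rewrite -!ltNge => wa_gt0.
have := small a aA (lt0r_neq0 wa_gt0); rewrite (gtr0_norm wa_gt0).
have := ler_wpM2l (ltW e_gt0) (ler_norm (- (cross w (vec a0) * cross w (vec a)))).
by rewrite normrN mulrN; lra.
Qed.

Definition ccw a b := 0 <= cross (vec a) (vec b).

Lemma ccw_refl : reflexive ccw.
Proof. by move=> a; rewrite /ccw cross_self. Qed.

Lemma ccw_total : total ccw.
Proof.
move=> a b; rewrite /ccw (crossC (vec b)) oppr_ge0.
by case: (lerP 0 (cross (vec a) (vec b))) => // /ltW.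
Qed.

Lemma ccw_trans_open u : {in open_hp u & &, transitive ccw}.
Proof. by move=> b a c ub ua uc; apply: cross_ge0_trans ub uc. Qed.

Lemma sort_ccw u s : all (open_hp u) s -> pairwise ccw (sort ccw s).
Proof.
move=> s_open; rewrite -(sorted_pairwise_in (ccw_trans_open u)).
  exact: (sort_sorted_in (in2W ccw_total)).
by rewrite (perm_all _ (permEl (perm_sort _ _))).
Qed.

Lemma pairwise_ccw_head s b : pairwise ccw s -> b \in s -> ccw s`_0 b.
Proof.
case: s => // a s /andP [/allP a_le _].
by rewrite inE => /predU1P [->|]; [exact: ccw_refl | exact: a_le].
Qed.

Lemma pairwise_ccw_nth s k : pairwise ccw s -> (k < size s)%N ->
  {in take k s, forall y, ccw y s`_k} /\ {in drop k.+1 s, forall z, ccw s`_k z}.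
Proof.
move=> s_ccw k_lt; move: s_ccw.
rewrite -[in pairwise _ s](cat_take_drop k s) (drop_nth 0 k_lt) pairwise_cat.
case/and3P => /allrelP before _ /andP [/allP after _].
by split=> [y yt|]; [apply: before; rewrite ?inE ?eqxx | exact: after].
Qed.

Section SortedSide.
Variables (u w : R * R) (s : seq (int * int)).
Hypotheses (s_open : all (open_hp u) s) (s_ccw : pairwise ccw s).

Let open_s {x} : x \in s -> open_hp u x.
Proof. exact: (allP s_open). Qed.

Lemma closed_hp_prefix_or_suffix k : (k < size s)%N -> closed_hp w s`_k ->
  all (closed_hp w) (take k.+1 s) || all (closed_hp w) (drop k s).
Proof.
move=> k_lt wk; have [before after] := pairwise_ccw_nth _ _ s_ccw k_lt.
apply/norP => -[/allPn [y yt wy] /allPn [z zd wz]].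
move: yt zd; rewrite (take_nth 0 k_lt) (drop_nth 0 k_lt) mem_rcons !inE.
case/predU1P => [ey|yt]; first by rewrite ey wk in wy.
case/predU1P => [ez|zd]; first by rewrite ez wk in wz.
move: wk wy wz; rewrite !closed_hpE !negbK => /negP wk wy wz; apply: wk.
apply: (dot_gt0_between u w _ (vec y) (vec z)) => //.
- exact/open_s/mem_nth.
- exact: open_s (mem_take yt).
- exact: open_s (mem_drop zd).
- exact: before.
- exact: after.
Qed.

Lemma open_hp_prefix k : (k < size s)%N -> open_hp w s`_0 -> open_hp w s`_k ->
  all (open_hp w) (take k.+1 s).
Proof.
move=> k_lt w0 wk; have [before _] := pairwise_ccw_nth _ _ s_ccw k_lt.
apply/allP => z; rewrite (take_nth 0 k_lt) mem_rcons inE => /predU1P [-> //|zt].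
have s0 : (0 < size s)%N by apply: leq_ltn_trans k_lt.
apply: (dot_gt0_between u w _ (vec s`_0) (vec s`_k)) => //.
- exact: open_s (mem_take zt).
- exact/open_s/mem_nth.
- exact/open_s/mem_nth.
- exact: (pairwise_ccw_head _ _ s_ccw (mem_take zt)).
- exact: before.
Qed.

End SortedSide.

Section OppositeSides.
Variables (u w : R * R) (s t : seq (int * int)).
Hypotheses (s_open : all (open_hp u) s) (t_open : all (open_hp (- u)) t).
Hypotheses (s_ccw : pairwise ccw s) (t_ccw : pairwise ccw t).

Let head_mem {r : seq (int * int)} {x} : x \in r -> r`_0 \in r.
Proof. by case: r => // a r _; apply: mem_head. Qed.

Let open_s {x} : x \in s -> 0 < dot u (vec x).
Proof. exact: (allP s_open). Qed.

Let open_t {x} : x \in t -> dot u (vec x) < 0.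
Proof. by move/(allP t_open); rewrite open_hpN. Qed.

Lemma closed_hp_opposite : closed_hp w s`_0 -> closed_hp w t`_0 ->
  all (closed_hp w) s || all (closed_hp w) t.
Proof.
move=> ws wt; case: (boolP (all _ s)) => //= /allPn [b bs wb].
apply/allP => e et.
have [] := dot_le0_opposite u w (vec s`_0) (vec b) (vec t`_0) (vec e);
  rewrite -?/(closed_hp _ _) //.
- exact: open_s (head_mem bs).
- exact: open_s.
- exact: open_t (head_mem et).
- exact: open_t.
- exact: (pairwise_ccw_head _ _ s_ccw bs).
- exact: (pairwise_ccw_head _ _ t_ccw et).
- by move=> wb'; rewrite wb' in wb.
Qed.

Lemma open_hp_opposite : open_hp w s`_0 -> open_hp w t`_0 ->
  all (open_hp w) s || all (open_hp w) t.
Proof.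
move=> ws wt; case: (boolP (all _ s)) => //= /allPn [b bs wb].
apply/allP => e et.
have [] := dot_gt0_opposite u w (vec s`_0) (vec b) (vec t`_0) (vec e);
  rewrite -?/(open_hp _ _) //.
- exact: open_s (head_mem bs).
- exact: open_s.
- exact: open_t (head_mem et).
- exact: open_t.
- exact: (pairwise_ccw_head _ _ s_ccw bs).
- exact: (pairwise_ccw_head _ _ t_ccw et).
- by move=> wb'; rewrite wb' in wb.
Qed.

End OppositeSides.

Lemma count_closed_all_open w s : all (open_hp w) s -> count (closed_hp w) s = 0%N.
Proof.
move/allP=> s_open; apply/eqP; rewrite -leqn0 leqNgt -has_count.
by apply/hasP => -[a /s_open]; rewrite closed_hpE => ->.
Qed.

(* [w] is the outer normal of a closed half-plane through [p] holding the
   minimum number [d] of points, none of them on its boundary line; [Ls] and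
   [Ts] are the points strictly inside and strictly outside it, in angular order. *)
Record tight_split A d w Ts Ls : Prop := TightSplit {
  tight_normal : w != 0;
  tight_depth : depth_ge A d;
  tight_perm : perm_eq A (Ts ++ Ls);
  tight_Ts_open : all (open_hp w) Ts;
  tight_Ls_open : all (open_hp (- w)) Ls;
  tight_Ts_ccw : pairwise ccw Ts;
  tight_Ls_ccw : pairwise ccw Ls;
  tight_size_Ls : size Ls = d;
  tight_size_Ts : (d <= size Ts)%N }.

Lemma exists_tight_split A : avoids A -> exists d w Ts Ls, tight_split A d w Ts Ls.
Proof.
move=> av; have [d [w [w_neq0 wd depth]]] := exists_min_depth A.
have no_bd := tight_no_boundary _ _ _ av depth w_neq0 wd.
have openN_closed : {in A, open_hp (- w) =1 closed_hp w}.
  by move=> a aA; rewrite open_hpN /closed_hp lt_neqAle no_bd.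
have closedN_open : {in A, closed_hp (- w) =1 open_hp w}.
  move=> a aA; rewrite /closed_hp /open_hp dotNl oppr_le0 le_eqVlt eq_sym.
  by rewrite (negbTE (no_bd a aA)).
pose T := filter (open_hp w) A; pose L := filter (open_hp (- w)) A.
have ATL : perm_eq A (T ++ L).
  have -> : L = filter (predC (open_hp w)) A.
    by apply: eq_in_filter => a aA; rewrite openN_closed // closed_hpE.
  by rewrite perm_sym perm_filterC.
have perm_sortl s : perm_eq (sort ccw s) s by rewrite perm_sort.
exists d, w, (sort ccw T), (sort ccw L); split.
- exact: w_neq0.
- exact: depth.
- by apply: (perm_trans ATL); rewrite perm_sym perm_cat.
- by rewrite (perm_all _ (perm_sortl T)) filter_all.
- by rewrite (perm_all _ (perm_sortl L)) filter_all.
- exact: (sort_ccw _ _ (filter_all _ _)).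
- exact: (sort_ccw _ _ (filter_all _ _)).
- by rewrite size_sort size_filter -wd; apply: eq_in_count.
- have := depth (- w); rewrite oppr_eq0 => /(_ w_neq0).
  by rewrite size_sort size_filter (eq_in_count closedN_open).
Qed.

Section TightSplit.
Context {A Ts Ls : seq (int * int)} {d m : nat} {w0 : R * R}.
Hypotheses (A_avoids : avoids A) (S : tight_split A d w0 Ts Ls).
Hypothesis depthAm : depth_ge A m.

Let w0_neq0 : w0 != 0. Proof. by case: S. Qed.
Let depthA : depth_ge A d. Proof. by case: S. Qed.
Let permA : perm_eq A (Ts ++ Ls). Proof. by case: S. Qed.
Let Ts_open : all (open_hp w0) Ts. Proof. by case: S. Qed.
Let Ls_open : all (open_hp (- w0)) Ls. Proof. by case: S. Qed.
Let Ts_ccw : pairwise ccw Ts. Proof. by case: S. Qed.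
Let Ls_ccw : pairwise ccw Ls. Proof. by case: S. Qed.
Let size_Ls : size Ls = d. Proof. by case: S. Qed.
Let d_le_Ts : (d <= size Ts)%N. Proof. by case: S. Qed.

Let count_A P : count P A = (count P Ts + count P Ls)%N.
Proof. by rewrite (permP permA) count_cat. Qed.

Let size_A : size A = (size Ts + d)%N.
Proof. by rewrite (perm_size permA) size_cat size_Ls. Qed.

Let m_le_d : (m <= d)%N.
Proof.
have := depthAm w0 w0_neq0; rewrite count_A count_closed_all_open // -size_Ls.
suff: all (closed_hp w0) Ls by rewrite all_count => /eqP ->.
by apply/allP => v /(allP Ls_open); rewrite open_hpN /closed_hp => /ltW.
Qed.

Lemma tight_pivot_count w : (m < size Ts)%N -> closed_hp w Ts`_m ->
  (minn m.+1 (size Ts - m) <= count (closed_hp w) Ts)%N.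
Proof.
move=> m_lt wm.
have count_Ts k : count (closed_hp w) Ts =
    (count (closed_hp w) (take k Ts) + count (closed_hp w) (drop k Ts))%N.
  by rewrite -count_cat cat_take_drop.
case/orP: (closed_hp_prefix_or_suffix _ _ _ Ts_open Ts_ccw _ m_lt wm);
  rewrite all_count => /eqP cnt.
  by rewrite (count_Ts m.+1) cnt size_takel //; lia.
by rewrite (count_Ts m) cnt size_drop; lia.
Qed.

Lemma tight_deletion : (3 * m < size A)%N -> exists2 x, x \in A & depth_ge (rem x A) m.
Proof.
move=> sizeA_gt; have m_lt : (m < size Ts)%N by lia.
have xA : Ts`_m \in A by rewrite (perm_mem permA) mem_cat mem_nth.
exists Ts`_m => // w w_neq0; rewrite count_rem xA /=.
have := depthA w w_neq0; set c := count (closed_hp w) A.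
case wm: (closed_hp w Ts`_m); last by rewrite subn0; lia.
have := tight_pivot_count w m_lt wm; rewrite /c count_A; lia.
Qed.

Section Triangle.
Hypotheses (m_gt0 : (0 < m)%N) (size_A3 : size A = (3 * m)%N).

Let m_lt_Ts : (m < size Ts)%N. Proof. lia. Qed.

Let t1 := Ts`_0.
Let tm := Ts`_m.
Let l1 := Ls`_0.
Let M1 := drop 1 (take m Ts).
Let M2 := drop m.+1 Ts.
Let L1 := drop 1 Ls.
Let rest := M1 ++ M2 ++ L1.

Let Ls_decomp : Ls = l1 :: L1.
Proof. by rewrite -[LHS]drop0 (drop_nth 0) // size_Ls; lia. Qed.

Let Ts_decomp : Ts = t1 :: M1 ++ tm :: M2.
Proof.
have take_decomp : take m Ts = t1 :: M1.
  by rewrite -[LHS]drop0 (drop_nth 0) ?nth_take // size_takel // ltnW.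
by rewrite -{1}(cat_take_drop m Ts) take_decomp (drop_nth 0 m_lt_Ts).
Qed.

Let count_Ts P : count P Ts = (P t1 + count P M1 + P tm + count P M2)%N.
Proof. by rewrite [in LHS]Ts_decomp /= count_cat /=; lia. Qed.

Let count_Ls P : count P Ls = (P l1 + count P L1)%N.
Proof. by rewrite [in LHS]Ls_decomp. Qed.

Lemma triangle_perm : perm_eq A ([:: t1; tm; l1] ++ rest).
Proof.
apply/permP => P; rewrite count_A count_Ts count_Ls /= !count_cat; lia.
Qed.

Lemma triangle_cover w : w != 0 -> [|| closed_hp w t1, closed_hp w tm | closed_hp w l1].
Proof.
move=> w_neq0; apply/negPn/negP; rewrite !negb_or !closed_hpE !negbK.
case/and3P => w1 wm wl; have := depthA w w_neq0; rewrite leqNgt => /negP; apply.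
rewrite count_A; case/orP: (open_hp_opposite _ _ _ _ Ts_open Ls_open Ts_ccw Ls_ccw w1 wl).
  move=> /count_closed_all_open ->; rewrite count_Ls closed_hpE wl /=.
  by have := count_size (closed_hp w) L1; rewrite size_drop; lia.
move=> /count_closed_all_open ->; rewrite addn0 -(cat_take_drop m.+1 Ts) count_cat.
rewrite count_closed_all_open ?(open_hp_prefix _ _ _ Ts_open Ts_ccw _ m_lt_Ts w1 wm) //.
by have := count_size (closed_hp w) (drop m.+1 Ts); rewrite size_drop; lia.
Qed.

Let count_rest P : count P rest = (count P M1 + count P M2 + count P L1)%N.
Proof. by rewrite !count_cat addnA. Qed.

Let count_rest_sub P :
  count P rest = (count P A - (P t1 + P tm + P l1))%N.
Proof. by rewrite count_rest count_A count_Ts count_Ls; lia. Qed.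

Lemma triangle_rest_depth_slack : (m < d)%N -> depth_ge rest m.-1.
Proof.
move=> m_lt_d w w_neq0; rewrite count_rest_sub; have dc := depthA w w_neq0.
move: (leq_b1 (closed_hp w t1)) (leq_b1 (closed_hp w tm)) (leq_b1 (closed_hp w l1)).
have [c_big|c_small] := ltnP m.+1 (count (closed_hp w) A).
  by clear -dc c_big; lia.
have tight : count (closed_hp w) A = d by clear -dc c_small m_lt_d; lia.
have no_bd := tight_no_boundary _ _ _ A_avoids depthA w_neq0 tight.
have out v : v \in A -> closed_hp (- w) v -> closed_hp w v = false.
  move=> vA; rewrite /closed_hp dotNl oppr_le0 => v_ge0.
  by apply/negbTE; rewrite -ltNge lt_def no_bd.
have Ts_A v : v \in Ts -> v \in A by rewrite (perm_mem permA) mem_cat => ->.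
have t1A : t1 \in A by apply/Ts_A/mem_nth/(leq_ltn_trans (leq0n m) m_lt_Ts).
have tmA : tm \in A by apply/Ts_A/mem_nth.
have l1A : l1 \in A.
  by rewrite (perm_mem permA) mem_cat [in X in _ || X]Ls_decomp mem_head orbT.
have := triangle_cover (- w); rewrite oppr_eq0 => /(_ w_neq0).
case/or3P => [/(out _ t1A) | /(out _ tmA) | /(out _ l1A)] -> /=;
  by clear -dc m_lt_d; lia.
Qed.

Lemma triangle_rest_depth_tight : d = m -> depth_ge rest m.-1.
Proof.
move=> dm w w_neq0; rewrite count_rest; have := depthA w w_neq0.
have := count_A (closed_hp w); rewrite count_Ts count_Ls => ->.
move: (leq_b1 (closed_hp w t1)) (leq_b1 (closed_hp w tm)) (leq_b1 (closed_hp w l1)).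
case wm: (closed_hp w tm).
  have size_Ts : size Ts = (2 * m)%N by clear -size_A size_A3 dm; lia.
  case/orP: (closed_hp_prefix_or_suffix _ _ _ Ts_open Ts_ccw _ m_lt_Ts wm);
    rewrite all_count => /eqP cnt.
    have := count_Ts (closed_hp w); rewrite -{1}(cat_take_drop m.+1 Ts) count_cat cnt.
    by rewrite size_takel // wm; clear; lia.
  move: cnt; rewrite (drop_nth 0 m_lt_Ts) /= size_drop size_Ts -/tm -/M2 wm.
  by clear; lia.
case w1: (closed_hp w t1); last by clear -dm; lia.
case wl: (closed_hp w l1); last by clear -dm; lia.
case/orP: (closed_hp_opposite _ _ _ _ Ts_open Ls_open Ts_ccw Ls_ccw w1 wl).
  by move/allP/(_ tm (mem_nth _ m_lt_Ts)); rewrite wm.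
rewrite all_count count_Ls wl size_Ls => /eqP.
by clear -dm; lia.
Qed.

Lemma tight_triangle :
  exists T B, [/\ size T = 3%N, perm_eq A (T ++ B), in_conv T p & depth_ge B m.-1].
Proof.
exists [:: t1; tm; l1], rest; split => //.
- exact: triangle_perm.
- apply: in_conv_triangle => [v v_tri|]; last exact: triangle_cover.
  by apply: A_avoids; rewrite (perm_mem triangle_perm) mem_cat v_tri.
- case: (ltngtP m d) => [m_lt_d | d_lt_m | md].
  + exact: triangle_rest_depth_slack.
  + by move: d_lt_m; rewrite ltnNge m_le_d.
  + exact: triangle_rest_depth_tight (esym md).
Qed.

End Triangle.

End TightSplit.

Lemma deletion_step A m : avoids A -> depth_ge A m -> (3 * m < size A)%N ->
  exists2 x, x \in A & depth_ge (rem x A) m.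
Proof.
move=> av depth sizeA; have [d [w [Ts [Ls S]]]] := exists_tight_split _ av.
exact: (tight_deletion S depth sizeA).
Qed.

Lemma triangle_step A m : avoids A -> depth_ge A m.+1 -> size A = (3 * m.+1)%N ->
  exists T B, [/\ size T = 3%N, perm_eq A (T ++ B), in_conv T p & depth_ge B m].
Proof.
move=> av depth sizeA; have [d [w [Ts [Ls S]]]] := exists_tight_split _ av.
exact: (tight_triangle av S depth (ltn0Sn m) sizeA).
Qed.

Lemma exists_core A m : avoids A -> depth_ge A m -> (3 * m <= size A)%N ->
  exists A0 A1, [/\ perm_eq A (A0 ++ A1), size A0 = (3 * m)%N & depth_ge A0 m].
Proof.
have [n] := ubnP (size A); elim: n A => // n IH A /ltnSE sizeA_le av depth.
rewrite leq_eqVlt => /predU1P [sizeA|sizeA_gt].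
  by exists A, [::]; split; [rewrite cats0 | rewrite sizeA | exact: depth].
have [x xA depth'] := deletion_step A m av depth sizeA_gt.
have size_remA : size (rem x A) = (size A).-1 by rewrite size_rem.
have av' : avoids (rem x A) by move=> v /mem_rem /av.
have size_lt : (size (rem x A) < n)%N by rewrite size_remA; clear -sizeA_le sizeA_gt; lia.
have size_ge : (3 * m <= size (rem x A))%N by rewrite size_remA; clear -sizeA_gt; lia.
have [A0 [A1 [permA sizeA0 depthA0]]] := IH (rem x A) size_lt av' depth' size_ge.
exists A0, (x :: A1); split; [|exact: sizeA0|exact: depthA0].
apply: perm_trans (perm_to_rem xA) _.
by rewrite perm_sym -[x :: A1]cat1s perm_catCA /= perm_cons perm_sym.
Qed.

Lemma partition_core A m : avoids A -> depth_ge A m -> size A = (3 * m)%N ->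
  exists parts, [/\ size parts = m, perm_eq (flatten parts) A &
                    forall B, B \in parts -> in_conv B p].
Proof.
elim: m A => [|m IH] A av depth sizeA.
  by exists [::]; rewrite (size0nil sizeA); split.
have [T [B [sizeT permA convT depthB]]] := triangle_step A m av depth sizeA.
have avB : avoids B by move=> v vB; apply: av; rewrite (perm_mem permA) mem_cat vB orbT.
have sizeB : size B = (3 * m)%N.
  by have := perm_size permA; rewrite size_cat sizeT sizeA mulnS => /addnI.
have [parts [size_parts flat_parts conv_parts]] := IH B avB depthB sizeB.
exists (T :: parts); split=> /=; first by rewrite size_parts.
  by rewrite perm_sym (perm_trans permA) // perm_cat2l perm_sym.
by move=> C; rewrite inE => /predU1P [->|/conv_parts].
Qed.

End Depth.

Theorem lemma2 (R : realType) (m : nat) (A : seq (int * int)) (p : R * R) :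
  (3 <= m)%N -> (4 * m - 3 <= size A)%N ->
  (forall a, a \in A -> p != embed R a) ->
  halfspace_depth A p m ->
  exists parts : seq (seq (int * int)),
    [/\ size parts = m,
        perm_eq (flatten parts) A &
        forall B, B \in parts -> in_conv B p].
Proof.
move=> m_ge3 sizeA pA depth.
have av := avoids_embed p A pA.
have [|A0 [A1 [permA sizeA0 depthA0]]] :=
  exists_core p A m av (depth_ge_halfspace_depth p A m depth).
  by clear -sizeA m_ge3; lia.
have avA0 : avoids p A0 by move=> v vA0; apply: av; rewrite (perm_mem permA) mem_cat vA0.
have [[|B parts] [size_parts flat_parts conv_parts]] := partition_core p A0 m avA0 depthA0 sizeA0.
  by move: m_ge3; rewrite -size_parts.
exists ((A1 ++ B) :: parts); split; first exact: size_parts.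
  by rewrite /= -catA perm_sym (perm_trans permA) // perm_catC perm_cat2l perm_sym.
move=> C; rewrite inE => /predU1P [->|C_parts].
  by apply: in_conv_catl; apply: conv_parts; apply: mem_head.
by apply: conv_parts; rewrite inE C_parts orbT.
Qed.
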